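(* The equivalence class (under $\sim$) of any upper prime consists entirely of upper primes of the same length, and the equivalence class of any lower prime consists entirely of lower primes of the same length.
   Context: $\mathcal{A}$ is the free associative $\mathbb{C}$-algebra on noncommuting generators $L,R$; words are finite products of these letters. A word is balanced if it contains equally many $L$'s and $R$'s. $\mathcal{J}$ is the two-sided ideal generated by $\{FG-GF : F,G \text{ nonempty balanced words}\}$, and $X\sim Y$ means $X-Y\in\mathcal{J}$. A word is prime if it is nonempty, balanced, and not a product of two nonempty balanced words. For balanced $W=a_1\cdots a_n$, $e_k(W)=\sum_{i=1}^k\overline{a_i}$ with $\overline{R}=1$, $\overline{L}=-1$. A prime $P$ of length $n$ is an upper prime if $e_k(P)>0$ for $1\le k\le n-1$, and a lower prime if $e_k(P)<0$ for $1\le k\le n-1$. *)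

From HB Require Import structures.
From mathcomp Require Import all_boot all_order all_algebra.
From mathcomp Require Import complex.
From mathcomp Require Import Rstruct.
Set Implicit Arguments. Unset Strict Implicit. Unset Printing Implicit Defensive.
Import Order.TTheory GRing.Theory Num.Theory.

Inductive letter := L | R.

Definition letter_eqb (a b : letter) : bool :=
  match a, b with L, L | R, R => true | _, _ => false end.
Lemma letter_eqP : Equality.axiom letter_eqb.
Proof. by case; case; constructor. Qed.
HB.instance Definition _ := hasDecEq.Build letter letter_eqP.

Definition word := seq letter.

Definition CC := complex Rdefinitions.R.

Definition balanced (W : word) : bool := count_mem L W == count_mem R W.

Definition nonempty_balanced (W : word) : bool := (W != [::]) && balanced W.

Definition prime_word (W : word) : Prop :=
  nonempty_balanced W /\
  ~ (exists U V : word, [/\ nonempty_balanced U, nonempty_balanced V & W = U ++ V]).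

Definition lbar (a : letter) : int := if a is R then 1 else -1.

Definition ek (k : nat) (W : word) : int := \sum_(a <- take k W) lbar a.

Definition upper_prime (P : word) : Prop :=
  prime_word P /\ forall k, (1 <= k <= (size P).-1)%N -> (0 < ek k P)%R.

Definition lower_prime (P : word) : Prop :=
  prime_word P /\ forall k, (1 <= k <= (size P).-1)%N -> (ek k P < 0)%R.

(* Elements of A are represented by their coefficient functions word -> C
   (finitely supported).  A generator datum (c, u, F, G, v) stands for
   c * u (F G - G F) v; the two-sided ideal J generated by the commutators
   [F,G] of nonempty balanced words consists exactly of the finite sums of
   such terms. *)
Definition gen_term (g : CC * word * word * word * word) (w : word) : CC :=
  let: (c, u, F, G, v) := g in
  (c * (((u ++ F ++ G ++ v) == w)%:R - ((u ++ G ++ F ++ v) == w)%:R))%R.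

Definition gen_ok (g : CC * word * word * word * word) : bool :=
  let: (c, u, F, G, v) := g in nonempty_balanced F && nonempty_balanced G.

Definition in_J (f : word -> CC) : Prop :=
  exists gs : seq (CC * word * word * word * word),
    all gen_ok gs /\ forall w, f w = (\sum_(g <- gs) gen_term g w)%R.

Definition sim (X Y : word) : Prop :=
  in_J (fun w => ((X == w)%:R - (Y == w)%:R)%R).

From mathcomp Require Import all_boot all_order all_algebra.
From mathcomp Require Import zify.
From mathcomp Require Import complex Rstruct.
Set Implicit Arguments. Unset Strict Implicit. Unset Printing Implicit Defensive.
Import Order.TTheory GRing.Theory Num.Theory.

(* Swapping two adjacent nonempty balanced blocks F, G in uFGv creates no new
   value among the interior prefix sums e_k: inside the moved blocks the sums
   are those of uFGv shifted by a balanced block, and the boundary value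
   e_{|u|} reappears as e_{|u|+|F|}, an interior position since F, G are
   nonempty.  So every predicate on words built from the interior prefix
   sums, the length and the letter counts takes equal values on uFGv and
   uGFv, and the linear functional counting the words satisfying it
   vanishes on J.  Upper (lower) primes are exactly the nonempty balanced
   words whose interior prefix sums are all positive (negative). *)

Definition height (W : word) : int := \sum_(a <- W) lbar a.

Lemma height_count W : height W = ((count_mem R W)%:Z - (count_mem L W)%:Z)%R.
Proof.
rewrite /height; elim: W => [|a W IH]; first by rewrite big_nil.
by rewrite big_cons IH; case: a => /=; lia.
Qed.

Lemma height_balanced W : balanced W -> height W = 0%R.
Proof. by rewrite height_count /balanced => /eqP ->; rewrite subrr. Qed.

Lemma ek_cat_le k x y : k <= size x -> ek k (x ++ y) = ek k x.
Proof.
rewrite leq_eqVlt => /predU1P [->|lt_kx]; first by rewrite /ek take_size_cat // take_size.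
by rewrite /ek take_cat lt_kx.
Qed.

Lemma ek_cat_size_add x y i : ek (size x + i) (x ++ y) = (height x + ek i y)%R.
Proof. by rewrite /ek take_cat ltnNge leq_addr addKn big_cat. Qed.

Lemma ek0 W : ek 0 W = 0%R.
Proof. by rewrite /ek take0 big_nil. Qed.

Lemma ek_cat_size x y : ek (size x) (x ++ y) = height x.
Proof. by rewrite -[size x]addn0 ek_cat_size_add ek0 addr0. Qed.

Lemma nonempty_balanced_size_gt0 W : nonempty_balanced W -> 0 < size W.
Proof. by case/andP; rewrite lt0n size_eq0. Qed.

Lemma ek_swap_front F G v j :
    nonempty_balanced F -> nonempty_balanced G -> 0 < j < size (G ++ F ++ v) ->
  exists2 j', 0 < j' < size (F ++ G ++ v) & ek j (G ++ F ++ v) = ek j' (F ++ G ++ v).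
Proof.
move=> nbF nbG; rewrite !size_cat => hj.
have hF := height_balanced (andP nbF).2; have hG := height_balanced (andP nbG).2.
have sF := nonempty_balanced_size_gt0 nbF; have sG := nonempty_balanced_size_gt0 nbG.
have [lt_jG|le_Gj] := ltnP j (size G).
  exists (size F + j); first lia.
  by rewrite ek_cat_size_add hF add0r !ek_cat_le // ltnW.
have [i def_j] : exists i, j = size G + i by exists (j - size G); rewrite subnKC.
rewrite def_j ek_cat_size_add hG add0r.
have [i0|i_gt0] := posnP i.
  by exists (size F); rewrite ?i0 ?ek0 ?ek_cat_size ?hF //; lia.
have [le_iF|lt_Fi] := leqP i (size F).
  by exists i; rewrite ?ek_cat_le //; lia.
exists j; first lia.
have [l def_i] : exists l, i = size F + l by exists (i - size F); rewrite subnKC // ltnW.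
by rewrite def_j def_i addnCA !ek_cat_size_add hF hG !add0r.
Qed.

Lemma ek_swap_interior u F G v k :
    nonempty_balanced F -> nonempty_balanced G -> 0 < k < size (u ++ G ++ F ++ v) ->
  exists2 k', 0 < k' < size (u ++ F ++ G ++ v) &
              ek k (u ++ G ++ F ++ v) = ek k' (u ++ F ++ G ++ v).
Proof.
move=> nbF nbG hk; have [le_ku|lt_uk] := leqP k (size u).
  by exists k; rewrite ?ek_cat_le // !size_cat in hk *; lia.
have [j def_k] : exists j, k = size u + j by exists (k - size u); rewrite subnKC // ltnW.
have [|j' hj' eq_j] := @ek_swap_front F G v j nbF nbG.
  by rewrite !size_cat in hk *; lia.
exists (size u + j'); first by rewrite !size_cat in hk hj' *; lia.
by rewrite def_k !ek_cat_size_add eq_j.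
Qed.

Definition swap_invariant (Q : pred word) : Prop :=
  forall u F G v, nonempty_balanced F -> nonempty_balanced G ->
  Q (u ++ F ++ G ++ v) = Q (u ++ G ++ F ++ v).

Lemma swap_invariant_perm (Q : pred word) :
  (forall X Y, perm_eq X Y -> Q X = Q Y) -> swap_invariant Q.
Proof. by move=> QP u F G v _ _; apply: QP; rewrite perm_cat2l perm_catCA. Qed.

Lemma perm_nonempty_balanced X Y :
  perm_eq X Y -> nonempty_balanced X = nonempty_balanced Y.
Proof.
move=> pXY; rewrite /nonempty_balanced /balanced -!size_eq0 (perm_size pXY).
by rewrite !(permP pXY).
Qed.

Lemma swap_invariant_nonempty_balanced : swap_invariant nonempty_balanced.
Proof. exact: swap_invariant_perm perm_nonempty_balanced. Qed.

Section InteriorProfile.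

Variable p : pred int.

Definition interior_profile (W : word) : bool :=
  all (fun k => p (ek k W)) (iota 1 (size W).-1).

Lemma interior_profileP W :
  reflect (forall k, 1 <= k <= (size W).-1 -> p (ek k W)) (interior_profile W).
Proof.
apply: (iffP allP) => [pW k hk|pW k]; first by apply: pW; rewrite mem_iota; lia.
by rewrite mem_iota => hk; apply: pW; lia.
Qed.

Lemma swap_invariant_interior_profile : swap_invariant interior_profile.
Proof.
suff swap_imp u F G v : nonempty_balanced F -> nonempty_balanced G ->
    interior_profile (u ++ F ++ G ++ v) -> interior_profile (u ++ G ++ F ++ v).
  by move=> u F G v nbF nbG; apply/idP/idP; apply: swap_imp.
move=> nbF nbG /interior_profileP pX; apply/interior_profileP => k hk.
have [|k' hk' ->] := @ek_swap_interior u F G v k nbF nbG.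
  by move: hk; rewrite !size_cat; lia.
by apply: pX; move: hk'; rewrite !size_cat; lia.
Qed.

Hypothesis p0 : ~~ p 0%R.

Lemma interior_profile_prime W :
  nonempty_balanced W -> interior_profile W -> prime_word W.
Proof.
move=> nbW /interior_profileP pW; split=> // -[U [V [nbU nbV eW]]].
have sU := nonempty_balanced_size_gt0 nbU; have sV := nonempty_balanced_size_gt0 nbV.
apply/negP: p0; rewrite negbK -(height_balanced (andP nbU).2) -(ek_cat_size U V) -eW.
by apply: pW; rewrite eW size_cat; lia.
Qed.

End InteriorProfile.

Definition prime_with_profile (p : pred int) (W : word) : Prop :=
  prime_word W /\ forall k, 1 <= k <= (size W).-1 -> p (ek k W).

Lemma prime_with_profileE (p : pred int) W : ~~ p 0%R ->
  prime_with_profile p W <-> nonempty_balanced W && interior_profile p W.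
Proof.
move=> p0; split=> [[[nbW _] pW]|/andP[nbW pW]].
  by rewrite nbW; apply/interior_profileP.
by split; [exact: (interior_profile_prime p0) | apply/interior_profileP].
Qed.

Lemma sum_indicator (Q : pred word) (t : seq word) a : uniq t -> a \in t ->
  (\sum_(w <- t | Q w) ((a == w)%:R : CC))%R = (Q a)%:R%R.
Proof.
move=> ut at_; rewrite big_mkcond (bigD1_seq a) //= eqxx big1 ?addr0.
  by case: (Q a).
by move=> w; rewrite eq_sym => /negbTE ->; case: (Q w).
Qed.

(* Sum the identity W - P = sum of generators over the words of t satisfying
   Q: the generator c u(FG - GF)v contributes c (Q (uFGv) - Q (uGFv)) = 0. *)
Lemma sim_invariant (Q : pred word) W P : swap_invariant Q -> sim W P -> Q W = Q P.
Proof.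
move=> QI [gs [ok fE]].
pose words (g : CC * word * word * word * word) :=
  let: (_, u, F, G, v) := g in [:: u ++ F ++ G ++ v; u ++ G ++ F ++ v].
pose t := undup (W :: P :: flatten (map words gs)).
have ut : uniq t by apply: undup_uniq.
have words_t g x : g \in gs -> x \in words g -> x \in t.
  by move=> gin xg; rewrite mem_undup !inE; apply/or3P/Or33/flatten_mapP; exists g.
have gen_vanish : (\sum_(w <- t | Q w) \sum_(g <- gs) gen_term g w)%R = 0%R.
  rewrite exchange_big big1_seq //= => -[[[[c u] F] G] v] gin.
  have /andP[nbF nbG] := allP ok _ gin.
  rewrite -mulr_sumr sumrB !sum_indicator // ?(words_t _ _ gin) ?inE ?eqxx ?orbT //.
  by rewrite QI // subrr mulr0.
move: gen_vanish; rewrite -(eq_bigr _ (fun w _ => fE w)) sumrB.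
rewrite !sum_indicator // ?mem_undup ?inE ?eqxx ?orbT // => /eqP.
by rewrite subr_eq0 eqr_nat; case: (Q W) (Q P) => -[].
Qed.

Lemma sim_size W P : sim W P -> size W = size P.
Proof.
move=> sWP; apply/eqP; rewrite (@sim_invariant (fun X => size X == size P) W P) //.
by apply: swap_invariant_perm => X Y /perm_size ->.
Qed.

Lemma sim_prime_with_profile (p : pred int) P W : ~~ p 0%R ->
  prime_with_profile p P -> sim W P -> prime_with_profile p W /\ size W = size P.
Proof.
move=> p0 /(prime_with_profileE _ p0) QP sWP; split; last exact: sim_size.
apply/(prime_with_profileE _ p0).
by rewrite (sim_invariant swap_invariant_nonempty_balanced sWP)
           (sim_invariant (swap_invariant_interior_profile p) sWP).
Qed.

Theorem lemma5p6 :
  (forall P W : word, upper_prime P -> sim W P -> upper_prime W /\ size W = size P) /\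
  (forall P W : word, lower_prime P -> sim W P -> lower_prime W /\ size W = size P).
Proof.
split=> P W.
- exact: (@sim_prime_with_profile (fun x => 0 < x)%R).
- exact: (@sim_prime_with_profile (fun x => x < 0)%R).
Qed.
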